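(* Let $\mathcal{N}=(\mathcal{S},\mathcal{C},\mathcal{R})$ be an open chemical reaction network. Then $\ker(J_c(f_\kappa))\cap\Gamma\neq\{0\}$ for all $\kappa\in\mathbb{R}_+^{\mathcal{R}}$ and all $c\in\mathbb{R}^n_+$ if and only if for every set of $n$ reactions $y^1\to y'^1,\dots,y^n\to y'^n$ of $\mathcal{N}$ such that the vectors $y^1-y'^1,\dots,y^n-y'^n$ are linearly independent, the complexes $y^1,\dots,y^n$ are linearly dependent.
   Context: A chemical reaction network $\mathcal{N}=(\mathcal{S},\mathcal{C},\mathcal{R})$ consists of a finite set of species $\mathcal{S}=\{S_1,\dots,S_n\}$, a finite set of complexes $\mathcal{C}\subset\mathbb{Z}_{\ge 0}^n$ (species $S_i$ identified with the $i$-th standard basis vector), and a finite set of reactions $\mathcal{R}\subset\mathcal{C}\times\mathcal{C}$, written $y\to y'$, with $y\ne y'$. A rate vector is $\kappa=(k_{y\to y'})\in\mathbb{R}_+^{\mathcal{R}}$ ($\mathbb{R}_+$ the positive reals); the mass-action species formation rate function is $f_\kappa(c)=\sum_{y\to y'\in\mathcal{R}}k_{y\to y'}c^y(y'-y)$, $c^y=\prod_i c_i^{y_i}$, with Jacobian $J_c(f_\kappa)$ at $c$. The stoichiometric subspace is $\Gamma=\mathrm{span}\{y'-y:y\to y'\in\mathcal{R}\}$; the network is open if $\Gamma=\mathbb{R}^n$. *)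

From HB Require Import structures.
From mathcomp Require Import all_boot all_order all_algebra.
From mathcomp Require Import all_classical all_reals all_analysis.
Set Implicit Arguments. Unset Strict Implicit. Unset Printing Implicit Defensive.
Import Order.TTheory GRing.Theory Num.Theory.
Local Open Scope ring_scope.

(* A chemical reaction network on n species with m reactions: reaction r is
   [src r -> tgt r], complexes are vectors in Z_{>=0}^n (row vectors of nats). *)

Definition cplx (R : ringType) (n : nat) (y : 'rV[nat]_n) : 'rV[R]_n :=
  map_mx (fun k : nat => k%:R) y.

Definition crn_wf (n m : nat) (src tgt : 'I_m -> 'rV[nat]_n) : Prop :=
  injective (fun r => (src r, tgt r)) /\ (forall r, src r <> tgt r).

Definition monom (R : ringType) (n : nat) (c : 'rV[R]_n) (y : 'rV[nat]_n) : R :=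
  \prod_(i < n) c 0 i ^+ y 0 i.

Definition fkappa (R : ringType) (n m : nat) (src tgt : 'I_m -> 'rV[nat]_n)
  (k : 'I_m -> R) (c : 'rV[R]_n) : 'rV[R]_n :=
  \sum_(r < m) (k r * monom c (src r)) *: (cplx R (tgt r) - cplx R (src r)).

(* Stoichiometric subspace Gamma: row space of the matrix of reaction vectors. *)
Definition stoich (R : ringType) (n m : nat) (src tgt : 'I_m -> 'rV[nat]_n)
  : 'M[R]_(m, n) :=
  \matrix_(r < m) (cplx R (tgt r) - cplx R (src r)).

Definition crn_open (R : fieldType) (n m : nat) (src tgt : 'I_m -> 'rV[nat]_n) :=
  row_full (stoich R src tgt).

From HB Require Import structures.
From mathcomp Require Import all_boot all_order all_algebra.
From mathcomp Require Import all_classical all_reals all_analysis.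
From mathcomp Require Import fingroup perm ring.
Import Order.TTheory GRing.Theory Num.Theory.
Import numFieldNormedType.Exports.
Set Implicit Arguments. Unset Strict Implicit. Unset Printing Implicit Defensive.
Local Open Scope ring_scope.

(* Let Y be the matrix of source complexes and G that of reaction vectors,
   rows indexed by reactions.  Up to transposition the Jacobian factors as
   J_c(f_kappa) = diag(c)^-1 Y^T diag(kappa_r c^(y_r)) G, and as the network is
   open the kernel condition just says that J_c(f_kappa) is singular.  The
   weights kappa_r c^(y_r) range over all positive vectors, so the left-hand
   side says that det (Y^T D G) = 0 for every positive diagonal D.  By
   Cauchy-Binet this determinant is a polynomial in the weights whose
   coefficients are the products det Y_S * det G_S of the n x n minors on the
   sets S of n reactions, and it vanishes for all positive weights exactly
   when all these products vanish, which is the right-hand side. *)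

Section CauchyBinet.
Variable R : comRingType.

Lemma tr_diag_mulmxE m n (A B : 'M[R]_(m, n)) (d : 'rV[R]_m) i j :
  (A^T *m diag_mx d *m B) i j = \sum_r A r i * d 0 r * B r j.
Proof. by rewrite mxE; apply: eq_bigr => r _; rewrite mul_mx_diag !mxE. Qed.

Lemma det_row_perm n (s : 'S_n) (A : 'M[R]_n) :
  \det (row_perm s A) = (-1) ^+ s * \det A.
Proof. by rewrite row_permE det_mulmx det_perm. Qed.

Lemma det_rowsub_eq0 m n (f : 'I_n -> 'I_m) (A : 'M[R]_(m, n)) :
  ~~ injectiveb f -> \det (rowsub f A) = 0.
Proof.
case/injectivePn=> i [j ij fij]; apply: (determinant_alternate ij) => k.
by rewrite !mxE fij.
Qed.

Lemma det_tr_diag_mulmx_expand m n (A B : 'M[R]_(m, n)) (d : 'rV[R]_m) :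
  \det (A^T *m diag_mx d *m B) =
  \sum_(f : {ffun 'I_n -> 'I_m})
     (\prod_i d 0 (f i)) * (\prod_i A (f i) i) * \det (rowsub f B).
Proof.
rewrite [LHS]/determinant.
under eq_bigr => s _.
  under eq_bigr => i _ do rewrite tr_diag_mulmxE.
  rewrite bigA_distr_bigA big_distrr /=.
  over.
rewrite exchange_big /=; apply: eq_bigr => f _.
rewrite /determinant big_distrr /=; apply: eq_bigr => s _.
rewrite mulrCA; congr (_ * _).
rewrite !big_split /=.
under [X in _ = _ * X]eq_bigr => i _ do rewrite mxE.
by rewrite [_ * \prod_i d 0 _]mulrC.
Qed.

(* The Cauchy-Binet formula, summed over all maps ['I_n -> 'I_m] rather than
   over increasing ones; the symmetrisation over ['S_n] produces the [n`!]. *)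
Lemma cauchy_binet_ffun m n (A B : 'M[R]_(m, n)) (d : 'rV[R]_m) :
  n`!%:R * \det (A^T *m diag_mx d *m B) =
  \sum_(f : {ffun 'I_n -> 'I_m})
     (\prod_i d 0 (f i)) * \det (rowsub f A) * \det (rowsub f B).
Proof.
rewrite det_tr_diag_mulmx_expand -card_Sn mulr_natl -sumr_const.
have permute_f (s : 'S_n) :
  \sum_(f : {ffun 'I_n -> 'I_m})
     (\prod_i d 0 (f i)) * (\prod_i A (f i) i) * \det (rowsub f B) =
  \sum_(f : {ffun 'I_n -> 'I_m})
     (\prod_i d 0 (f i)) * ((-1) ^+ s * \prod_i A (f (s i)) i) * \det (rowsub f B).
  pose fs (f : {ffun 'I_n -> 'I_m}) := [ffun i => f (s i)].
  have fs_inj : injective fs.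
    move=> f g /ffunP fg; apply/ffunP => i.
    by have := fg (s^-1 i)%g; rewrite !ffunE permKV.
  rewrite (reindex_inj fs_inj) /=; apply: eq_bigr => f _.
  have fsE i : fs f i = f (s i) by rewrite ffunE.
  have -> : rowsub (fs f) B = row_perm s (rowsub f B).
    by apply/matrixP => i j; rewrite !mxE fsE.
  have -> : \prod_i d 0 (fs f i) = \prod_i d 0 (f i).
    rewrite [RHS](reindex_inj (@perm_inj _ s)).
    by apply: eq_bigr => i _; rewrite fsE.
  have -> : \prod_i A (fs f i) i = \prod_i A (f (s i)) i.
    by apply: eq_bigr => i _; rewrite fsE.
  by rewrite det_row_perm [(-1) ^+ s * \prod_(i < n) _]mulrC !mulrA.
rewrite (eq_bigr _ (fun s _ => permute_f s)) exchange_big /=.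
apply: eq_bigr => f _.
have -> : \det (rowsub f A) = \sum_(s : 'S_n) (-1) ^+ s * \prod_i A (f (s i)) i.
  rewrite -det_tr; apply: eq_bigr => s _; congr (_ * _).
  by apply: eq_bigr => i _; rewrite !mxE.
by rewrite [\prod_i d 0 (f i) * _]big_distrr mulr_suml.
Qed.

End CauchyBinet.

Section PositiveWeights.
Variable R : numDomainType.

Lemma exists_nat_nonroot (p : {poly R}) :
  p != 0 -> exists k : nat, ~~ root p k.+1%:R.
Proof.
move=> p0; pose rs := [seq k.+1%:R : R | k <- iota 0 (size p)].
have rs_uniq : uniq rs.
  by rewrite map_inj_uniq ?iota_uniq // => a b /eqP; rewrite eqr_nat eqSS => /eqP.
have : ~~ all (root p) rs.
  apply/negP => rs_roots; have := max_poly_roots p0 rs_roots rs_uniq.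
  by rewrite size_map size_iota ltnn.
by case/allPn => _ /mapP [k _ ->]; exists k.
Qed.

Variables (m n : nat) (A B : 'M[R]_(m, n)).

Lemma det_tr_diag_mulmx_eq0 (d : 'rV[R]_m) :
  (forall s : 'I_n -> 'I_m, injective s ->
     \det (rowsub s A) * \det (rowsub s B) = 0) ->
  \det (A^T *m diag_mx d *m B) = 0.
Proof.
move=> AB0; have fact_neq0 : n`!%:R != 0 :> R by rewrite pnatr_eq0 -lt0n fact_gt0.
apply: (mulfI fact_neq0); rewrite mulr0 cauchy_binet_ffun big1 // => f _.
have [/injectiveP f_inj | f_ninj] := boolP (injectiveb f).
  by rewrite -mulrA AB0 ?mulr0.
by rewrite det_rowsub_eq0 // mulr0 mul0r.
Qed.

(* Weight 1 on the rows picked by [s] and a variable weight [x] elsewhere make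
   the determinant a polynomial in [x] whose value at [0] is the product of
   the two minors, so some positive integer [x] keeps it nonzero. *)
Lemma det_tr_diag_mulmx_neq0 (s : 'I_n -> 'I_m) :
  injective s -> \det (rowsub s A) * \det (rowsub s B) != 0 ->
  exists2 d : 'rV[R]_m,
    (forall r, 0 < d 0 r) & \det (A^T *m diag_mx d *m B) != 0.
Proof.
move=> s_inj AB_neq0; pose S := [set s i | i : 'I_n].
pose d (x : R) : 'rV[R]_m := \row_r (if r \in S then 1 else x).
pose dX : 'rV[{poly R}]_m := \row_r (if r \in S then 1 else 'X).
pose P := \det ((map_mx polyC A)^T *m diag_mx dX *m map_mx polyC B).
have P_eval x : P.[x] = \det (A^T *m diag_mx (d x) *m B).
  rewrite -horner_evalE -det_map_mx !map_mxM map_diag_mx -map_trmx.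
  congr (\det (_ *m _ *m _)); apply/matrixP => i j; rewrite !mxE /=.
  - exact: hornerC.
  - by case: (i \in S); rewrite horner_evalE ?hornerC ?hornerX.
  - exact: hornerC.
have d0E : A^T *m diag_mx (d 0) *m B = (rowsub s A)^T *m rowsub s B.
  apply/matrixP => i j; rewrite tr_diag_mulmxE !mxE.
  rewrite (bigID (mem S)) /= [X in _ + X]big1 => [|r /negbTE rS]; last first.
    by rewrite mxE rS mulr0 mul0r.
  rewrite addr0 big_imset /=; last by move=> a b _ _; exact: s_inj.
  apply: eq_big => [i'|i' _]; first by rewrite inE.
  by rewrite !mxE imset_f ?inE // mulr1.
have P_neq0 : P != 0.
  apply: contra_neq AB_neq0 => P0.
  by rewrite -det_tr -det_mulmx -d0E -P_eval P0 horner0.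
have [k Pk] := exists_nat_nonroot P_neq0.
exists (d k.+1%:R); last by rewrite -P_eval.
by move=> r; rewrite mxE; case: (r \in S); rewrite ?ltr01 ?ltr0Sn.
Qed.

End PositiveWeights.

Section Differentials.
Variable R : realType.

Lemma is_diff_coord n (c : 'rV[R]_n) (i : 'I_n) :
  is_diff c (fun z : 'rV[R]_n => z 0 i) (fun v => v 0 i).
Proof.
have @coord : {linear 'rV[R]_n -> R}.
  by exists (fun z : 'rV[R]_n => z 0 i); do 2![eexists]; do ?[constructor];
     rewrite ?mxE// => ? *; rewrite ?mxE//; move=> ?; rewrite !mxE.
have -> : (fun z : 'rV[R]_n => z 0 i) = coord by [].
apply: DiffDef; first exact: differentiable_coord.
by rewrite diff_lin //; apply: coord_continuous.
Qed.

Lemma is_diff_coord_exp n (c : 'rV[R]_n) (i : 'I_n) (e : nat) :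
  is_diff c (fun z : 'rV[R]_n => z 0 i ^+ e)
    (fun v => e%:R * c 0 i ^+ e.-1 * v 0 i).
Proof.
case: e => [|e].
  apply: is_diff_eq (is_diff_cst (1 : R) c) _.
  by apply/funext => v; rewrite !mul0r.
rewrite -[X in is_diff _ X](exprfctE _ e.+1).
exact: is_diff_eq (is_diffX e (is_diff_coord c i)) _.
Qed.

Lemma is_diff_prod_coord_exp n (c : 'rV[R]_n) (y : 'rV[nat]_n) (s : seq 'I_n) :
  (forall i, c 0 i != 0) ->
  is_diff c (fun z : 'rV[R]_n => \prod_(i <- s) z 0 i ^+ y 0 i)
    (fun v => (\prod_(i <- s) c 0 i ^+ y 0 i) *
              \sum_(i <- s) (y 0 i)%:R * v 0 i / c 0 i).
Proof.
move=> c_neq0; elim: s => [|a s IHs].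
  have -> : (fun z : 'rV[R]_n => \prod_(i <- [::]) z 0 i ^+ y 0 i) = cst 1.
    by apply/funext => z; rewrite big_nil.
  apply: is_diff_eq (is_diff_cst (1 : R) c) _.
  by apply/funext => v; rewrite !big_nil mulr0.
have -> : (fun z : 'rV[R]_n => \prod_(i <- a :: s) z 0 i ^+ y 0 i) =
    (fun z => z 0 a ^+ y 0 a) * (fun z => \prod_(i <- s) z 0 i ^+ y 0 i).
  by apply/funext => z; rewrite big_cons.
apply: is_diff_eq (is_diffM (is_diff_coord_exp c a (y 0 a)) IHs) _.
apply/funext => v /=; rewrite !big_cons mulrDr addrC -mulrA.
congr (_ + _); last by rewrite -mulrA.
rewrite /= [RHS]mulrCA; congr (_ * _).
have := c_neq0 a; case: (y 0 a) => [|e] ca; first by rewrite !(mul0r, mulr0).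
by rewrite exprS; field.
Qed.

Lemma is_diffZl (V W : normedModType R) (h dh : V -> R) (w : W) x :
  is_diff x h dh -> is_diff x (fun z => h z *: w) (fun v => dh v *: w).
Proof.
by move=> dhx; apply: DiffDef; [exact: differentiableZl | rewrite diffZl // diff_val].
Qed.

Lemma is_diff_sum (V W : normedModType R) m (f df : 'I_m -> V -> W) x :
  (forall r, is_diff x (f r) (df r)) ->
  is_diff x (\sum_(r < m) f r) (\sum_(r < m) df r).
Proof.
move=> dfx; elim/big_ind2 : _ => //; first exact: is_diff_cst.
by move=> ? ? ? ? ? ?; exact: is_diffD.
Qed.

End Differentials.

Lemma row_free_detE (F : fieldType) n (A : 'M[F]_n) : row_free A = (\det A != 0).
Proof. by rewrite row_free_unit unitmxE unitfE. Qed.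

Lemma monom_const1 (R : ringType) n (y : 'rV[nat]_n) :
  monom (const_mx 1 : 'rV[R]_n) y = 1.
Proof. by rewrite /monom big1 // => i _; rewrite mxE expr1n. Qed.

Section MassActionNetwork.
Variables (R : realType) (n m : nat) (src tgt : 'I_m -> 'rV[nat]_n).

Definition source_mx : 'M[R]_(m, n) := \matrix_(r < m) cplx R (src r).

Lemma jacobian_fkappa (k : 'I_m -> R) (c : 'rV[R]_n) :
  (forall i, c 0 i != 0) ->
  'J (fkappa src tgt k) c =
  diag_mx (\row_i (c 0 i)^-1) *m
  (source_mx^T *m diag_mx (\row_r (k r * monom c (src r))) *m stoich R src tgt).
Proof.
move=> c_neq0; set g := fun r => cplx R (tgt r) - cplx R (src r).
have fkappa_sum :
    fkappa src tgt k = \sum_(r < m) (fun z => (k r * monom z (src r)) *: g r).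
  by rewrite fct_sumE; apply/funext => z.
have fkappa_diff : is_diff c (fkappa src tgt k)
   (\sum_(r < m) (fun v : 'rV[R]_n => (k r * (monom c (src r) *
        \sum_(i <- index_enum 'I_n) (src r 0 i)%:R * v 0 i / c 0 i)) *: g r)).
  rewrite fkappa_sum; apply: is_diff_sum => r; apply: is_diffZl.
  by have := is_diffZ (k r) (is_diff_prod_coord_exp (src r) (index_enum _) c_neq0).
rewrite /jacobian (@diff_val _ _ _ _ _ _ _ fkappa_diff).
apply/matrixP => i j; rewrite mul_diag_mx [RHS]mxE tr_diag_mulmxE [(\row__ _) 0 i]mxE.
rewrite mxE fct_sumE summxE big_distrr; apply: eq_bigr => r _ /=.
rewrite (bigD1 i) //= big1 => [|l /negbTE li]; last by rewrite !mxE li mulr0 mul0r.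
by rewrite !mxE /= eqxx addr0 mulr1; ring.
Qed.

Lemma jacobian_kernel_nontrivialP (k : 'I_m -> R) (c : 'rV[R]_n) :
  crn_open R src tgt -> (forall i, 0 < c 0 i) ->
  (exists w : 'rV[R]_n, [/\ w != 0, (w <= stoich R src tgt)%MS
                            & w *m 'J (fkappa src tgt k) c = 0]) <->
  \det (source_mx^T *m diag_mx (\row_r (k r * monom c (src r)))
                   *m stoich R src tgt) = 0.
Proof.
move=> open_net c_pos; have c_neq0 i : c 0 i != 0 by rewrite gt_eqF.
transitivity (\det ('J (fkappa src tgt k) c) = 0).
  split=> [[w [w_neq0 _ wJ]] | /eqP/det0P [w w_neq0 wJ]].
    by apply/eqP/det0P; exists w.
  by exists w; split=> //; apply: submx_full.
have inv_c_neq0 : \prod_i (\row_i (c 0 i)^-1) 0 i != 0.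
  by apply/prodf_neq0 => i _; rewrite mxE invr_eq0.
rewrite jacobian_fkappa // det_mulmx det_diag.
by split=> [/eqP | ->]; [rewrite mulf_eq0 (negbTE inv_c_neq0) => /eqP | rewrite mulr0].
Qed.

Lemma row_free_source_rows (s : 'I_n -> 'I_m) :
  row_free (\matrix_(i < n) cplx R (src (s i))) = (\det (rowsub s source_mx) != 0).
Proof.
by rewrite row_free_detE; congr (\det _ != 0); apply/matrixP => i j; rewrite !mxE.
Qed.

Lemma row_free_reaction_rows (s : 'I_n -> 'I_m) :
  row_free (\matrix_(i < n) (cplx R (src (s i)) - cplx R (tgt (s i)))) =
  (\det (rowsub s (stoich R src tgt)) != 0).
Proof.
have -> : \matrix_(i < n) (cplx R (src (s i)) - cplx R (tgt (s i))) =
          - rowsub s (stoich R src tgt).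
  by apply/matrixP => i j; rewrite !mxE opprB.
by rewrite row_free_detE -scaleN1r detZ mulf_eq0 signr_eq0.
Qed.

End MassActionNetwork.

Theorem corollary8p2 (R : realType) (n m : nat) (src tgt : 'I_m -> 'rV[nat]_n) :
  crn_wf src tgt ->
  crn_open R src tgt ->
  (forall (k : 'I_m -> R) (c : 'rV[R]_n),
      (forall r, 0 < k r) -> (forall i, 0 < c 0 i) ->
      exists w : 'rV[R]_n,
        [/\ w != 0, (w <= stoich R src tgt)%MS & w *m 'J (fkappa src tgt k) c = 0])
  <->
  (forall s : 'I_n -> 'I_m,
      injective s ->
      row_free (\matrix_(i < n) (cplx R (src (s i)) - cplx R (tgt (s i)))) ->
      ~~ row_free (\matrix_(i < n) cplx R (src (s i)))).
Proof.
move=> _ open_net.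
split=> [kernel_nontrivial s s_inj | minors_sing k c _ c_pos].
- rewrite row_free_reaction_rows row_free_source_rows => stoich_s.
  apply/negP => source_s.
  have [d d_pos] := det_tr_diag_mulmx_neq0 s_inj (mulf_neq0 source_s stoich_s).
  have one_pos (i : 'I_n) : 0 < (const_mx 1 : 'rV[R]_n) 0 i by rewrite mxE.
  have rates_one : \row_r (d 0 r * monom (const_mx 1) (src r)) = d.
    by apply/rowP => r; rewrite mxE monom_const1 mulr1.
  have := kernel_nontrivial (fun r => d 0 r) _ d_pos one_pos.
  move/(jacobian_kernel_nontrivialP _ open_net one_pos).
  by rewrite rates_one => ->; rewrite eqxx.
- apply/(jacobian_kernel_nontrivialP k open_net c_pos)/det_tr_diag_mulmx_eq0.
  move=> s s_inj; apply/eqP; rewrite mulf_eq0.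
  have := minors_sing s s_inj.
  rewrite row_free_reaction_rows row_free_source_rows negbK.
  by case: eqP => [_ _ | _ /(_ isT) ->]; rewrite ?orbT.
Qed.
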